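(* Let $\mathcal L$ be a geometric lattice, $(\mathcal E,\iota)$ a modular extension of $\mathcal L$, and $F$ a modular coatom of $\mathcal L$. Let $P=\mathcal L\cup_{[\hat0,F]}\mathcal E=\{(A,B)\in\mathcal L\times\mathcal E:\ A\wedge F=\iota^{-1}(B\wedge\iota(F))\}$ with the order induced from $\mathcal L\times\mathcal E$ (a geometric lattice). Then the subset $\mathcal M=\{(A,B)\in P:\ \exists H\in\mathrm{At}(\mathcal L)\text{ with }H\not\le F,\ H\le A,\ \iota(H)\le B\}$ is a modular cut of $P$.
   Context: A geometric lattice is a finite lattice (bottom $\hat0$, top $\hat1$, join $\vee$, meet $\wedge$) which is ranked (rank function $\mathrm{rk}$), atomic and semimodular ($\mathrm{rk}(F_1\wedge F_2)+\mathrm{rk}(F_1\vee F_2)\le\mathrm{rk}(F_1)+\mathrm{rk}(F_2)$); its elements are called flats, its rank-one elements atoms ($\mathrm{At}(\mathcal L)$), and a coatom is a flat of rank $\mathrm{rk}(\hat1)-1$. A flat $F$ is modular if $\mathrm{rk}(F\wedge F')+\mathrm{rk}(F\vee F')=\mathrm{rk}(F)+\mathrm{rk}(F')$ for every flat $F'$. An embedding of geometric lattices is an injective order-preserving map preserving joins and sending atoms to atoms. A modular extension of $\mathcal L$ is a pair $(\mathcal E,\iota)$ with $\mathcal E$ a geometric lattice and $\iota:\mathcal L\to\mathcal E$ an embedding whose image is an interval $[\hat0,F_\iota]$ with $F_\iota$ modular in $\mathcal E$. A modular cut of a geometric lattice $P$ is a subset $\mathcal M\subseteq P$ which is upward closed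 and such that whenever $X,Y\in\mathcal M$ satisfy $\mathrm{rk}(X)+\mathrm{rk}(Y)=\mathrm{rk}(X\wedge Y)+\mathrm{rk}(X\vee Y)$, then $X\wedge Y\in\mathcal M$. *)

From mathcomp Require Import all_boot all_order.
Set Implicit Arguments. Unset Strict Implicit. Unset Printing Implicit Defensive.
Import Order.Theory.

Section Generic.
Variables (T : finType) (le : rel T).

Definition is_chain (A : {set T}) : bool :=
  [forall x in A, forall y in A, le x y || le y x].

(* Rank (height): one less than the maximal size of a chain of elements
   below x; for a ranked lattice this is the usual rank with rk(bot)=0. *)
Definition rk (x : T) : nat :=
  (\max_(A : {set T} | is_chain A && [forall y in A, le y x]) #|A|).-1.

Definition lt_ (x y : T) : bool := le x y && ~~ le y x.

Definition covers (x y : T) : bool :=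
  lt_ x y && [forall z, ~~ (lt_ x z && lt_ z y)].

Definition is_meet (x y z : T) : bool :=
  [&& le z x, le z y & [forall w, (le w x && le w y) ==> le w z]].
Definition is_join (x y z : T) : bool :=
  [&& le x z, le y z & [forall w, (le x w && le y w) ==> le z w]].

(* Modular cut of the lattice (T, le): upward closed, and closed under meets
   of modular pairs. *)
Definition modular_cut (M : pred T) : Prop :=
  (forall X Y, M X -> le X Y -> M Y) /\
  (forall X Y Z W, M X -> M Y -> is_meet X Y Z -> is_join X Y W ->
     rk X + rk Y = rk Z + rk W -> M Z).
End Generic.

Section Lattices.
Context {d : Order.disp_t} (L : finTBLatticeType d).
Local Notation rkL := (rk (<=%O : rel L)).

Definition atom (a : L) : bool := rkL a == 1.

Definition ranked : Prop :=
  forall x y : L, covers (<=%O : rel L) x y -> rkL y = (rkL x).+1.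

Definition atomic : Prop :=
  forall x : L, x = (\join_(a : L | atom a && (a <= x)) a)%O.

Definition semimodular : Prop :=
  forall x y : L, rkL (x `&` y)%O + rkL (x `|` y)%O <= rkL x + rkL y.

Definition geometric : Prop := [/\ ranked, atomic & semimodular].

Definition modular_flat (F : L) : Prop :=
  forall F' : L, rkL (F `&` F')%O + rkL (F `|` F')%O = rkL F + rkL F'.

Definition coatom (F : L) : Prop := rkL F = (rkL \top%O).-1.
End Lattices.

Section Ext.
Context {dL dE : Order.disp_t} {L : finTBLatticeType dL} {E : finTBLatticeType dE}.

Definition embedding (iota : L -> E) : Prop :=
  [/\ injective iota,
      {homo iota : x y / (x <= y)%O},
      {morph iota : x y / (x `|` y)%O} &
      forall a : L, atom a -> atom (iota a)].

(* (E, iota) is a modular extension of L (E itself geometric is a separate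
   hypothesis). *)
Definition modular_extension (iota : L -> E) : Prop :=
  embedding iota /\
  exists Fi : E, modular_flat Fi /\
    (forall y : E, (exists x : L, iota x = y) <-> (y <= Fi)%O).

(* P = L u_{[0,F]} E : pairs (A,B) with A /\ F = iota^{-1}(B /\ iota F),
   i.e. (iota injective) iota (A /\ F) = B /\ iota F. *)
Definition inP (iota : L -> E) (F : L) (p : L * E) : bool :=
  iota (p.1 `&` F)%O == (p.2 `&` iota F)%O.

Definition Pty (iota : L -> E) (F : L) := {p : L * E | inP iota F p}.

Definition Ple (iota : L -> E) (F : L) : rel (Pty iota F) :=
  fun X Y => ((val X).1 <= (val Y).1)%O && ((val X).2 <= (val Y).2)%O.

Definition Mpred (iota : L -> E) (F : L) : pred (Pty iota F) :=
  fun X => [exists H : L, [&& atom H, ~~ (H <= F)%O,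
                              (H <= (val X).1)%O & (iota H <= (val X).2)%O]].
End Ext.

Arguments Ple {dL dE L E} iota F.
Arguments Mpred {dL dE L E} iota F.

(* For X = (A, B) in M, witnessed by an atom H ≰ F, modularity of the coatom F
   gives rk (A ∧ F) + 1 = rk A, hence A = (A ∧ F) ∨ H and ι A ≤ B; so the rank
   of X in P exceeds rk_E B.  Let X, Y ∈ M have meet Z and join W.  If an atom
   H ≰ F lies below X.1 ∧ Y.1, then (H, ι H) ≤ Z and Z ∈ M.  Otherwise
   X.1 ∧ Y.1 ≤ F by atomicity, so rk_P Z ≤ rk_E (X.2 ∧ Y.2) while
   rk_P W ≤ rk_E (X.2 ∨ Y.2) + 1, and semimodularity of E gives
   rk_P Z + rk_P W < rk_P X + rk_P Y: the pair X, Y is not modular. *)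

From mathcomp Require Import all_boot all_order zify.
Set Implicit Arguments. Unset Strict Implicit. Unset Printing Implicit Defensive.
Import Order.Theory.

Section ChainRank.
Variables (T : finType) (le : rel T).
Hypotheses (le_refl : reflexive le) (le_trans : transitive le)
  (le_anti : antisymmetric le).

Lemma card_chain_leq_rk (x : T) (C : {set T}) :
  is_chain le C -> [forall y in C, le y x] -> #|C| <= (rk le x).+1.
Proof.
move=> chainC belowC; apply: leq_trans (leqSpred _).
by apply: (leq_bigmax_cond (F := fun A : {set T} => #|A|)); rewrite chainC belowC.
Qed.

Lemma exists_chain_rk (x : T) : exists C : {set T},
  [/\ is_chain le C, [forall y in C, le y x] & #|C| = (rk le x).+1].
Proof.
pose chains := [pred A : {set T} | is_chain le A && [forall y in A, le y x]].
have chain_x : [set x] \in chains.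
  rewrite inE; apply/andP; split; apply/forallP => a; apply/implyP => /set1P->.
    by apply/forallP => b; apply/implyP => /set1P->; rewrite le_refl.
  exact: le_refl.
have chains_gt0 : 0 < #|chains| by apply/card_gt0P; exists [set x].
have [C /andP[chainC belowC] maxC] :=
  eq_bigmax_cond (fun A : {set T} => #|A|) chains_gt0.
exists C; split => //; rewrite /rk [X in X.-1]maxC prednK //.
by rewrite -maxC (leq_trans _ (leq_bigmax_cond _ chain_x)) ?cards1.
Qed.

Lemma rk_lt (x y : T) : le x y -> x != y -> rk le x < rk le y.
Proof.
move=> le_xy neq_xy; have [C [chainC /forallP belowC cardC]] := exists_chain_rk x.
have below_y z : z \in C -> le z y.
  by move=> zC; apply: le_trans le_xy; have := belowC z; rewrite zC.
have yNC : y \notin C.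
  apply: contra neq_xy => yC; apply/eqP/le_anti; rewrite le_xy.
  by have := belowC y; rewrite yC.
have := card_chain_leq_rk (x := y) (C := y |: C).
rewrite cardsU1 yNC cardC ltnS; apply; apply/forallP => a; apply/implyP => /setU1P[->|aC].
- apply/forallP => b; apply/implyP => /setU1P[->|bC]; first by rewrite le_refl.
  by rewrite below_y ?orbT.
- apply/forallP => b; apply/implyP => /setU1P[->|bC]; first by rewrite below_y.
  by move/forallP: chainC => /(_ a); rewrite aC => /forallP/(_ b); rewrite bC.
- exact: le_refl.
- exact: below_y.
Qed.

Lemma rk_le (x y : T) : le x y -> rk le x <= rk le y.
Proof.
by move=> le_xy; case: (eqVneq x y) => [->//|neq_xy]; exact: ltnW (rk_lt le_xy neq_xy).
Qed.

Lemma rk_le_eq (x y : T) : le x y -> rk le y <= rk le x -> x = y.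
Proof.
by move=> le_xy; case: (eqVneq x y) => // neq_xy; rewrite leqNgt rk_lt.
Qed.

(* f is injective on a maximal chain below x, with values in [0, f x]. *)
Lemma rk_leq_strict_mono (f : T -> nat) (x : T) :
  (forall a b, le a b -> a != b -> f a < f b) -> rk le x <= f x.
Proof.
move=> f_lt; have [C [/forallP chainC /forallP belowC cardC]] := exists_chain_rk x.
rewrite -ltnS -cardC cardE -(size_map f).
have uniq_fC : uniq (map f (enum C)).
  rewrite map_inj_in_uniq ?enum_uniq // => a b; rewrite !mem_enum => aC bC fab.
  apply/eqP; apply: contraT => neq_ab.
  have /forallP/(_ b) := implyP (chainC a) aC; rewrite bC /= => /orP[le_ab|le_ba].
    by have := f_lt _ _ le_ab neq_ab; rewrite fab ltnn.
  by have := f_lt _ _ le_ba; rewrite eq_sym neq_ab fab ltnn => /(_ isT).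
rewrite -(size_iota 0 (f x).+1); apply: uniq_leq_size uniq_fC _.
move=> n /mapP[a]; rewrite mem_enum => aC ->; rewrite mem_iota /= ltnS.
have le_ax := implyP (belowC a) aC.
by case: (eqVneq a x) => [->//|neq_ax]; exact: ltnW (f_lt _ _ le_ax neq_ax).
Qed.

End ChainRank.

Lemma rk_leq_embed (T T' : finType) (le : rel T) (le' : rel T')
    (h : T' -> T) (y : T') (x : T) :
  transitive le -> reflexive le' -> injective h ->
  {homo h : a b / le' a b >-> le a b} -> le (h y) x -> rk le' y <= rk le x.
Proof.
move=> le_trans le'_refl inj_h h_mono le_yx.
have [C [/forallP chainC /forallP belowC cardC]] := exists_chain_rk le'_refl y.
rewrite -ltnS -cardC -(card_imset _ inj_h); apply: card_chain_leq_rk.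
  apply/forallP => u; apply/implyP => /imsetP[a aC ->].
  apply/forallP => v; apply/implyP => /imsetP[b bC ->].
  have /forallP/(_ b) := implyP (chainC a) aC; rewrite bC /=.
  by case/orP => [/h_mono->|/h_mono->]; rewrite ?orbT.
apply/forallP => u; apply/implyP => /imsetP[a aC ->].
exact: le_trans (h_mono _ _ (implyP (belowC a) aC)) le_yx.
Qed.

Section FiniteLattice.
Context {d : Order.disp_t} {L : finTBLatticeType d}.
Local Notation rkL := (rk (<=%O : rel L)).

Lemma lt_rk (x y : L) : (x <= y)%O -> x != y -> rkL x < rkL y.
Proof. exact: rk_lt lexx le_trans le_anti x y. Qed.

Lemma le_rk (x y : L) : (x <= y)%O -> rkL x <= rkL y.
Proof. exact: rk_le lexx le_trans le_anti x y. Qed.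

Lemma atomic_nle (x y : L) : atomic L -> ~~ (x <= y)%O ->
  exists2 a, atom a & (a <= x)%O && ~~ (a <= y)%O.
Proof.
move=> atomicL x_nle_y.
case: (boolP [exists a, atom a && ((a <= x)%O && ~~ (a <= y)%O)]).
  by case/existsP => a /andP[]; exists a.
move/existsPn => no_atom; case/negP: x_nle_y; rewrite (atomicL x).
apply/joinsP => a /andP[atom_a le_ax]; apply: contraR (no_atom a) => a_nle_y.
by rewrite atom_a le_ax.
Qed.

Lemma rk_meet_coatomS (F A : L) : coatom F -> modular_flat F -> ~~ (A <= F)%O ->
  (rkL (A `&` F)%O).+1 = rkL A.
Proof.
move=> coatomF modF AnF; have := modF A; rewrite meetC.
have : rkL F < rkL (F `|` A)%O.
  by rewrite lt_rk ?leUl //; apply: contra AnF => /eqP->; rewrite leUr.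
have : rkL (F `|` A)%O <= rkL \top%O by rewrite le_rk ?lex1.
by move: coatomF; rewrite /coatom; lia.
Qed.

End FiniteLattice.

Section Embedding.
Context {dL dE : Order.disp_t} {L : finTBLatticeType dL} {E : finTBLatticeType dE}
  (iota : L -> E) (Fi : E).
Hypotheses (iota_emb : embedding iota)
  (iota_image : forall y : E, (exists x : L, iota x = y) <-> (y <= Fi)%O).

Lemma emb_inj : injective iota.
Proof. by case: iota_emb. Qed.

Lemma emb_join : {morph iota : x y / (x `|` y)%O}.
Proof. by case: iota_emb. Qed.

Lemma le_emb (x y : L) : (iota x <= iota y)%O = (x <= y)%O.
Proof.
apply/idP/idP => [le_ixy|]; last by case: iota_emb => _ iota_mono _ _; apply: iota_mono.
by rewrite -(emb_inj (etrans (emb_join x y) (join_r le_ixy))) leUl.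
Qed.

Lemma emb_onto_below (x : L) (y : E) : (y <= iota x)%O -> exists z, iota z = y.
Proof.
by move=> le_yx; apply/iota_image/(le_trans le_yx)/iota_image; exists x.
Qed.

Lemma emb_meet : {morph iota : x y / (x `&` y)%O}.
Proof.
move=> x y; have [z iz] := emb_onto_below (leIl (iota x) (iota y)).
rewrite -iz; congr iota; apply/le_anti; rewrite !lexI -!le_emb iz leIl leIr.
by rewrite lexI !le_emb leIl leIr.
Qed.

End Embedding.

Section GluedLattice.
Context {dL dE : Order.disp_t} {L : finTBLatticeType dL} {E : finTBLatticeType dE}
  (iota : L -> E) (Fi : E) (F : L).
Hypotheses (iota_emb : embedding iota)
  (iota_image : forall y : E, (exists x : L, iota x = y) <-> (y <= Fi)%O)
  (coatomF : coatom F) (modF : modular_flat F).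

Local Notation P := (Pty iota F).
Local Notation rkE := (rk (<=%O : rel E)).
Local Notation rkP := (rk (Ple iota F)).

Lemma inPE (X : P) : iota ((val X).1 `&` F)%O = ((val X).2 `&` iota F)%O.
Proof. exact/eqP/(valP X). Qed.

Lemma Ple_refl : reflexive (Ple iota F).
Proof. by move=> X; rewrite /Ple !lexx. Qed.

Lemma Ple_trans : transitive (Ple iota F).
Proof.
by move=> Y X Z /andP[le_XY1 le_XY2] /andP[le_YZ1 le_YZ2]; rewrite /Ple
  (le_trans le_XY1 le_YZ1) (le_trans le_XY2 le_YZ2).
Qed.

Lemma Ple_anti : antisymmetric (Ple iota F).
Proof.
move=> X Y /andP[/andP[le_XY1 le_XY2] /andP[le_YX1 le_YX2]].
by apply/val_inj/injective_projections; apply/le_anti/andP.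
Qed.

Definition P_of_L (x : L) : P :=
  exist _ (x, iota x) (introT eqP (emb_meet iota_emb iota_image x F)).

(* The default value of [pick] is never reached, see [emb_proj_F]. *)
Definition proj_F (c : E) : L := odflt \bot%O [pick x | iota x == (c `&` iota F)%O].

Lemma emb_proj_F (c : E) : iota (proj_F c) = (c `&` iota F)%O.
Proof.
rewrite /proj_F; case: pickP => [x /eqP //|no_preimage].
have [x ix] := emb_onto_below iota_image (leIr (iota F) c).
by have := no_preimage x; rewrite ix eqxx.
Qed.

Lemma proj_F_le (c : E) : (proj_F c <= F)%O.
Proof. by rewrite -(le_emb iota_emb) emb_proj_F leIr. Qed.

Lemma inP_proj_F (c : E) : inP iota F (proj_F c, c).
Proof. by rewrite /inP /= meet_l ?proj_F_le // emb_proj_F. Qed.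

Definition P_of_E (c : E) : P := exist _ (proj_F c, c) (inP_proj_F c).

Lemma rkP_lt (X Y : P) : Ple iota F X Y -> X != Y -> rkP X < rkP Y.
Proof. exact: rk_lt Ple_refl Ple_trans Ple_anti X Y. Qed.

Lemma rkP_le (X Y : P) : Ple iota F X Y -> rkP X <= rkP Y.
Proof. exact: rk_le Ple_refl Ple_trans Ple_anti X Y. Qed.

Lemma P_of_L_le (x : L) (X : P) :
  (x <= (val X).1)%O -> (iota (val X).1 <= (val X).2)%O -> Ple iota F (P_of_L x) X.
Proof.
by move=> le_x le_X; rewrite /Ple /= le_x (le_trans _ le_X) ?(le_emb iota_emb).
Qed.

Lemma Mpred_fst (X : P) : Mpred iota F X ->
  ~~ ((val X).1 <= F)%O /\ (iota (val X).1 <= (val X).2)%O.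
Proof.
case/existsP => H /and4P[_ H_nleF H_le1 H_le2]; set A := (val X).1.
have A_nleF : ~~ (A <= F)%O by apply: contra H_nleF; apply: le_trans.
split => //.
have join_neq : (A `&` F != (A `&` F) `|` H)%O.
  apply: contra H_nleF => /eqP eq_join.
  by apply: le_trans (leIr F A); rewrite eq_join leUr.
have join_eq : ((A `&` F) `|` H)%O = A.
  apply: (rk_le_eq lexx le_trans le_anti); first by rewrite leUx leIl H_le1.
  by rewrite -(rk_meet_coatomS coatomF modF A_nleF) (lt_rk (leUl _ _) join_neq).
by rewrite -join_eq (emb_join iota_emb) leUx H_le2 (inPE X) leIl.
Qed.

Definition weight (X : P) : nat := rkE (val X).2 + ~~ ((val X).1 <= F)%O.

Lemma weight_lt (X Y : P) : Ple iota F X Y -> X != Y -> weight X < weight Y.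
Proof.
case: X Y => [[A B] inA] [[A' B'] inA'] /andP[/= le_A le_B] neq_XY.
have side_le : ~~ (A <= F)%O <= ~~ (A' <= F)%O.
  by case: (boolP (A' <= F)%O) => [A'_leF|]; rewrite ?(le_trans le_A A'_leF) ?leq_b1.
rewrite /weight /=; case: (eqVneq B B') => [eq_B|neq_B]; last first.
  by apply: leq_trans (leq_add (lt_rk le_B neq_B) side_le); rewrite addSn.
subst B'; rewrite ltn_add2l.
have neq_A : A != A'.
  by apply: contraNneq neq_XY => eq_A; apply/eqP/val_inj; rewrite /= eq_A.
have eq_meet : (A `&` F = A' `&` F)%O.
  by apply: (emb_inj iota_emb); rewrite (eqP inA) (eqP inA').
case: (boolP (A' <= F)%O) => [A'_leF|A'_nleF].
  by move: neq_A; rewrite -(meet_l A'_leF) -eq_meet meet_l ?eqxx ?(le_trans le_A A'_leF).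
case: (boolP (A <= F)%O) => // A_nleF; have := lt_rk le_A neq_A.
rewrite -(rk_meet_coatomS coatomF modF A_nleF).
by rewrite -(rk_meet_coatomS coatomF modF A'_nleF) eq_meet ltnn.
Qed.

Lemma rkP_leq_weight (X : P) : rkP X <= weight X.
Proof. by apply: (rk_leq_strict_mono Ple_refl); apply: weight_lt. Qed.

Lemma rkP_fst_nleF (X : P) : ~~ ((val X).1 <= F)%O -> (rkE (val X).2).+1 <= rkP X.
Proof.
move=> X_nleF.
have P_of_E_inj : injective P_of_E by move=> c c' /(congr1 (fun Y : P => (val Y).2)).
have P_of_E_mono : {homo P_of_E : c c' / (c <= c')%O >-> Ple iota F c c'}.
  by move=> c c' le_c; rewrite /Ple /= le_c andbT -(le_emb iota_emb) !emb_proj_F leI2.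
have le_X : Ple iota F (P_of_E (val X).2) X.
  by rewrite /Ple /= lexx andbT -(le_emb iota_emb) emb_proj_F -inPE (le_emb iota_emb) leIl.
have neq_X : P_of_E (val X).2 != X.
  by apply: contra X_nleF => /eqP <-; apply: proj_F_le.
apply: leq_ltn_trans (rkP_lt le_X neq_X).
exact: rk_leq_embed Ple_trans lexx P_of_E_inj P_of_E_mono (Ple_refl _).
Qed.

Lemma exists_upper_bound_snd_join (X Y : P) :
  (iota (val X).1 <= (val X).2)%O -> (iota (val Y).1 <= (val Y).2)%O ->
  exists W : P,
    [/\ Ple iota F X W, Ple iota F Y W & (val W).2 = ((val X).2 `|` (val Y).2)%O].
Proof.
set B := ((val X).2 `|` (val Y).2)%O; set A := ((val X).1 `|` (val Y).1 `|` proj_F B)%O.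
move=> le_X le_Y; have le_AB : (iota A <= B)%O.
  rewrite !(emb_join iota_emb) !leUx emb_proj_F leIl andbT.
  by rewrite (le_trans le_X (leUl _ _)) (le_trans le_Y (leUr _ _)).
have inW : inP iota F (A, B).
  rewrite /inP /= (emb_meet iota_emb iota_image); apply/eqP/le_anti.
  by rewrite leI2 //= lexI leIr andbT -emb_proj_F (le_emb iota_emb) leUr.
exists (exist _ (A, B) inW); split => //; rewrite /Ple /=.
- by rewrite leUl andbT (le_trans (leUl (val X).1 (val Y).1) (leUl _ _)).
- by rewrite leUr andbT (le_trans (leUr (val Y).1 (val X).1) (leUl _ _)).
Qed.

Lemma Mpred_upward (X Y : P) : Mpred iota F X -> Ple iota F X Y -> Mpred iota F Y.
Proof.
case/existsP => H /and4P[atomH H_nleF H_le1 H_le2] /andP[le_XY1 le_XY2].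
by apply/existsP; exists H; rewrite atomH H_nleF (le_trans H_le1) // (le_trans H_le2).
Qed.

Lemma rkP_nonmodular (X Y Z W : P) : semimodular E ->
  Mpred iota F X -> Mpred iota F Y -> (((val X).1 `&` (val Y).1) <= F)%O ->
  Ple iota F Z X -> Ple iota F Z Y -> is_join (Ple iota F) X Y W ->
  rkP Z + rkP W < rkP X + rkP Y.
Proof.
move=> semimodE MX MY meet_leF /andP[le_ZX1 le_ZX2] /andP[le_ZY1 le_ZY2].
move=> /and3P[_ _ /forallP W_min].
have [X_nleF le_X] := Mpred_fst MX; have [Y_nleF le_Y] := Mpred_fst MY.
have rk_Z : rkP Z <= rkE ((val X).2 `&` (val Y).2)%O.
  apply: leq_trans (rkP_leq_weight Z) _.
  have Z_leF : ((val Z).1 <= F)%O by rewrite (le_trans _ meet_leF) // lexI le_ZX1.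
  by rewrite /weight Z_leF addn0 le_rk // lexI le_ZX2.
have [W' [le_XW' le_YW' snd_W']] := exists_upper_bound_snd_join le_X le_Y.
have rk_W : rkP W <= (rkE ((val X).2 `|` (val Y).2)%O).+1.
  have := W_min W'; rewrite le_XW' le_YW' => /rkP_le le_W.
  apply: leq_trans le_W (leq_trans (rkP_leq_weight W') _).
  by rewrite /weight snd_W' -addn1 leq_add2l leq_b1.
apply: leq_ltn_trans (leq_add rk_Z rk_W) _.
apply: leq_trans (leq_add (rkP_fst_nleF X_nleF) (rkP_fst_nleF Y_nleF)).
by rewrite addnS addSn addnS !ltnS semimodE.
Qed.

Lemma Mpred_modular_meet (X Y Z W : P) : atomic L -> semimodular E ->
  Mpred iota F X -> Mpred iota F Y -> is_meet (Ple iota F) X Y Z ->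
  is_join (Ple iota F) X Y W -> rkP X + rkP Y = rkP Z + rkP W -> Mpred iota F Z.
Proof.
move=> atomicL semimodE MX MY meetZ joinW rk_eq.
have /and3P[le_ZX le_ZY /forallP Z_max] := meetZ.
case: (boolP (((val X).1 `&` (val Y).1) <= F)%O) => [meet_leF|meet_nleF].
  by have := rkP_nonmodular semimodE MX MY meet_leF le_ZX le_ZY joinW; rewrite rk_eq ltnn.
have [H atomH /andP[H_le H_nleF]] := atomic_nle atomicL meet_nleF.
move: H_le; rewrite lexI => /andP[H_leX H_leY].
have le_HX := P_of_L_le H_leX (Mpred_fst MX).2.
have le_HY := P_of_L_le H_leY (Mpred_fst MY).2.
have /andP[/= H_leZ1 H_leZ2] :=
  implyP (Z_max (P_of_L H)) (introT andP (conj le_HX le_HY)).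
by apply/existsP; exists H; rewrite atomH H_nleF H_leZ1 H_leZ2.
Qed.

End GluedLattice.

Theorem mainTheorem14 (dL dE : Order.disp_t)
  (L : finTBLatticeType dL) (E : finTBLatticeType dE)
  (iota : L -> E) (F : L) :
  geometric L -> geometric E -> modular_extension iota ->
  coatom F -> modular_flat F ->
  modular_cut (Ple iota F) (Mpred iota F).
Proof.
move=> [_ atomicL _] [_ _ semimodE] [iota_emb [Fi [_ iota_image]]] coatomF modF.
split; first exact: Mpred_upward.
move=> X Y Z W.
by apply: (Mpred_modular_meet iota_emb iota_image coatomF modF atomicL semimodE).
Qed.
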